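(* Let $X$ be a space with $|X|<\mathfrak{d}$. (a) If $X$ is absolutely strongly star-Lindelöf, then $X$ is selectively strongly star-Menger. (b) If $X$ is absolutely Star-$\sigma$-cd, then $X$ is strongly selectively $(a)$.
   Context: All spaces are regular. $St(A,\mathcal{U})=\bigcup\{U\in\mathcal{U}:U\cap A\neq\emptyset\}$. $\mathfrak{d}$ is the dominating number. $X$ is absolutely strongly star-Lindelöf if for every open cover $\mathcal{U}$ and every dense $D\subseteq X$ there is a countable $C\subseteq D$ with $St(C,\mathcal{U})=X$. $X$ is selectively strongly star-Menger if for every sequence $(\mathcal{U}_n:n\in\omega)$ of open covers and every sequence $(D_n:n\in\omega)$ of dense subsets there are finite $F_n\subseteq D_n$ with $\{St(F_n,\mathcal{U}_n):n\in\omega\}$ covering $X$. $X$ is absolutely Star-$\sigma$-cd if for every dense $D\subseteq X$ and every open cover $\mathcal{U}$ there is $K\subseteq D$ which is a countable union of closed discrete subsets of $X$ with $St(K,\mathcal{U})=X$. $X$ is strongly selectively $(a)$ if for every sequence $(\mathcal{U}_n)$ of open covers and every sequence $(D_n)$ of dense subsets there are sets $C_n\subseteq D_n$, each closed and discrete in $X$, with $\{St(C_n,\mathcal{U}_n):n\in\omega\}$ covering $X$. *)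

From HB Require Import structures.
From mathcomp Require Import all_boot all_order all_algebra.
From mathcomp Require Import all_classical all_reals all_analysis.
Set Implicit Arguments. Unset Strict Implicit. Unset Printing Implicit Defensive.
Local Open Scope classical_set_scope.

Definition eventually_le (g h : nat -> nat) : Prop :=
  exists N : nat, forall n : nat, (N <= n)%N -> (g n <= h n)%N.

Definition dominating_family (F : set (nat -> nat)) : Prop :=
  forall g : nat -> nat, exists h, F h /\ eventually_le g h.

(* |T| < d : no family of functions indexed by T (hence of size <= |T|)
   is dominating; d = min size of a dominating family. *)
Definition card_lt_dominating (T : Type) : Prop :=
  forall f : T -> (nat -> nat), ~ dominating_family (range f).

Section Star.
Context {T : topologicalType}.

Definition open_cover (U : set (set T)) : Prop :=
  (forall u, U u -> open u) /\ (forall x : T, exists u, U u /\ u x).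

Definition St (A : set T) (U : set (set T)) : set T :=
  [set x | exists u, U u /\ u `&` A !=set0 /\ u x].

Definition closed_discrete (C : set T) : Prop :=
  closed C /\
  forall x, C x -> exists V : set T, open V /\ V x /\ V `&` C = [set x].

Definition abs_strongly_star_Lindelof : Prop :=
  forall (U : set (set T)) (D : set T), open_cover U -> dense D ->
    exists C : set T, C `<=` D /\ countable C /\ St C U = setT.

Definition selectively_strongly_star_Menger : Prop :=
  forall (U : nat -> set (set T)) (D : nat -> set T),
    (forall n, open_cover (U n)) -> (forall n, dense (D n)) ->
    exists F : nat -> set T,
      (forall n, F n `<=` D n /\ finite_set (F n)) /\
      (forall x : T, exists n, St (F n) (U n) x).

Definition abs_Star_sigma_cd : Prop :=
  forall (D : set T) (U : set (set T)), dense D -> open_cover U ->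
    exists K : set T, K `<=` D /\
      (exists C : nat -> set T, (forall n, closed_discrete (C n)) /\
         K = \bigcup_n C n) /\
      St K U = setT.

Definition strongly_selectively_a : Prop :=
  forall (U : nat -> set (set T)) (D : nat -> set T),
    (forall n, open_cover (U n)) -> (forall n, dense (D n)) ->
    exists C : nat -> set T,
      (forall n, C n `<=` D n /\ closed_discrete (C n)) /\
      (forall x : T, exists n, St (C n) (U n) x).

End Star.

From HB Require Import structures.
From mathcomp Require Import all_boot all_order all_algebra.
From mathcomp Require Import all_classical all_reals all_analysis.
Local Open Scope classical_set_scope.

(* Both implications follow one diagonal pattern.  For each n the
   "absolute" property applied to U n and D n gives a set S n inside D n
   whose star is all of X, and S n is split into countably many small
   pieces (singletons of a countable set in (a), closed discrete pieces
   in (b)).  Every point x determines the sequence f_x(n) = index of a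
   piece of S n whose star contains x.  As |X| < d, the family {f_x}
   is not dominating: a single g satisfies f_x(n) < g(n) infinitely
   often for every x.  Taking in round n the union of the pieces with
   index <= g(n) gives a finite set (a), resp. a closed discrete set (b),
   and every x is covered in the rounds where f_x(n) < g(n). *)

Lemma not_dominated (T : Type) (f : T -> nat -> nat) :
  card_lt_dominating T -> exists g : nat -> nat, forall x, exists n, (f x n < g n)%N.
Proof.
move=> /(_ f) /existsNP [g not_dom]; exists g => x.
apply: contrapT => never_above; apply: not_dom; exists (f x); split; first by exists x.
exists 0%N => n _; rewrite leqNgt; apply/negP => lt_fg.
by apply: never_above; exists n.
Qed.

Lemma finite_bounded_code (T : Type) (A : set T) (code : T -> nat) (b : nat) :
  {in A &, injective code} -> finite_set [set c | A c /\ (code c <= b)%N].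
Proof.
move=> code_inj; apply: (@card_le_finite _ _ _ `I_b.+1) => //.
apply/pcard_leP/injfunPex; exists code; first by move=> c [_ le_cb] /=; rewrite ltnS.
by move=> a c; rewrite !inE => -[Aa _] [Ac _]; apply: code_inj; rewrite inE.
Qed.

Section Stars.
Context {T : topologicalType}.
Implicit Types (A : set T) (U : set (set T)).

Lemma St_mono A B U : A `<=` B -> St A U `<=` St B U.
Proof.
move=> AB x [u [Uu [[c [uc Ac]] ux]]]; exists u; split => //; split => //.
by exists c; split => //; apply: AB.
Qed.

Lemma St_point A U x : St A U x -> exists2 a, A a & St [set a] U x.
Proof.
move=> [u [Uu [[a [ua Aa]] ux]]]; exists a => //.
by exists u; split => //; split => //; exists a.
Qed.

Lemma St_bigcup (C : nat -> set T) U x :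
  St (\bigcup_m C m) U x -> exists m, St (C m) U x.
Proof.
move=> [u [Uu [[c [uc [m _ Cc]]] ux]]]; exists m.
by exists u; split => //; split => //; exists c.
Qed.

End Stars.

Section ClosedDiscrete.
Context {T : topologicalType}.

Definition isolated_in (C : set T) (x : T) : Prop :=
  exists V : set T, open V /\ V x /\ V `&` C = [set x].

(* Adding a closed set Y keeps a point of X isolated, provided it is
   isolated in Y as well when it belongs to Y: intersect the isolating
   neighbourhood with the one from Y, or with the open complement of Y. *)
Lemma isolated_setU (X Y : set T) x : closed Y -> isolated_in X x ->
  (Y x -> isolated_in Y x) -> isolated_in (X `|` Y) x.
Proof.
move=> clY [V [oV [Vx VX]]] isoY.
have inV (W : set T) (Z : set T) y : W `&` Z = [set x] -> W y -> Z y -> y = x.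
  by move=> WZ Wy Zy; have : (W `&` Z) y by []; rewrite WZ.
have Xx : X x by have [] : (V `&` X) x by rewrite VX.
have [Yx|nYx] := pselect (Y x).
  have [W [oW [Wx WY]]] := isoY Yx.
  exists (V `&` W); split; first exact: openI.
  split; first by [].
  apply/seteqP; split => [y [[Vy Wy] [Xy|Yy]]|y ->].
  - exact: inV VX Vy Xy.
  - exact: inV WY Wy Yy.
  - by split; [split|left].
exists (V `&` ~` Y); split; first by apply: openI => //; rewrite openC.
split; first by [].
apply/seteqP; split => [y [[Vy nYy] [Xy|//]]|y ->].
- exact: inV VX Vy Xy.
- by split; [split|left].
Qed.

Lemma closed_discrete0 : closed_discrete (@set0 T).
Proof. by split => [|//]; exact: closed0. Qed.

Lemma closed_discreteU (A B : set T) :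
  closed_discrete A -> closed_discrete B -> closed_discrete (A `|` B).
Proof.
move=> [clA isoA] [clB isoB]; split; first exact: closedU.
move=> x [Ax|Bx]; first exact: isolated_setU clB (isoA x Ax) (isoB x).
by rewrite setUC; exact: isolated_setU clA (isoB x Bx) (isoA x).
Qed.

Lemma closed_discrete_bigcup_ord (C : nat -> set T) (n : nat) :
  (forall m, closed_discrete (C m)) -> closed_discrete (\bigcup_(m < n) C m).
Proof.
move=> cdC; rewrite bigcup_mkord.
by apply: big_ind => //; [exact: closed_discrete0 | exact: closed_discreteU].
Qed.

End ClosedDiscrete.

Section Selection.
Context {T : topologicalType}.
Hypothesis small_T : card_lt_dominating T.

Lemma abs_ssL_selectively_ssM :
  @abs_strongly_star_Lindelof T -> @selectively_strongly_star_Menger T.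
Proof.
move=> assL U D coverU denseD.
have /choice [C HC] := fun n => assL (U n) (D n) (coverU n) (denseD n).
have /choice [code code_inj] : forall n, exists code : T -> nat, {in C n &, injective code}.
  by move=> n; apply/countable_injP; case: (HC n) => _ [].
have /choice [pt pt_spec] : forall x, exists p : nat -> T,
    forall n, C n (p n) /\ St [set p n] (U n) x.
  move=> x; suff /choice [p Hp] : forall n, exists c, C n c /\ St [set c] (U n) x.
    by exists p.
  move=> n; have [_ [_ StC]] := HC n.
  have /St_point [c Cc Stc] : St (C n) (U n) x by rewrite StC.
  by exists c.
have [g escape] := @not_dominated T (fun x n => code n (pt x n)) small_T.
exists (fun n => [set c | C n c /\ (code n c <= g n)%N]); split.
  move=> n; split; last exact: finite_bounded_code.
  by move=> c [Cc _]; case: (HC n) => /(_ c Cc).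
move=> x; have [n lt_g] := escape x; exists n.
have [Cp Stp] := pt_spec x n; apply: St_mono Stp => _ -> /=.
by split => //; exact: ltnW.
Qed.

Lemma abs_Star_sigma_cd_strongly_selectively_a :
  @abs_Star_sigma_cd T -> @strongly_selectively_a T.
Proof.
move=> asc U D coverU denseD.
have /choice [K HK] := fun n => asc (D n) (U n) (denseD n) (coverU n).
have /choice [C HC] : forall n, exists C : nat -> set T,
    (forall m, closed_discrete (C m)) /\ K n = \bigcup_m C m.
  by move=> n; case: (HK n) => _ [].
have /choice [idx idx_spec] : forall x, exists i : nat -> nat,
    forall n, St (C n (i n)) (U n) x.
  move=> x; suff /choice [i Hi] : forall n, exists m, St (C n m) (U n) x.
    by exists i.
  move=> n; apply: St_bigcup.
  by have [_ [_ StK]] := HK n; rewrite -(proj2 (HC n)) StK.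
have [g escape] := @not_dominated T idx small_T.
exists (fun n => \bigcup_(m < (g n).+1) C n m); split.
  move=> n; split; last exact: closed_discrete_bigcup_ord (proj1 (HC n)).
  move=> y [m _ Cy]; have [KD _] := HK n; apply: KD.
  by rewrite (proj2 (HC n)); exists m.
move=> x; have [n lt_g] := escape x; exists n.
by apply: St_mono (idx_spec x n); apply: bigcup_sup; rewrite /= ltnS ltnW.
Qed.

End Selection.

Theorem mainTheorem4 (T : topologicalType) :
  accessible_space T -> regular_space T ->
  card_lt_dominating T ->
  (@abs_strongly_star_Lindelof T -> @selectively_strongly_star_Menger T) /\
  (@abs_Star_sigma_cd T -> @strongly_selectively_a T).
Proof.
move=> _ _ small_T; split.
- exact: abs_ssL_selectively_ssM small_T.
- exact: abs_Star_sigma_cd_strongly_selectively_a small_T.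
Qed.
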